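(* With the matrices defined in the context, the matrix $$A^E_{p\beta}=\begin{pmatrix}A_p^E & \tau B_{\bm w}M_{\bm w}^{-1}B_\beta^\top\\ \tau B_\beta M_{\bm w}^{-1}B_{\bm w}^\top & \tau B_\beta M_{\bm w}^{-1}B_\beta^\top\end{pmatrix},\qquad A_p^E=\tfrac1M M_p+\alpha^2B_bD_{bb}^{-1}B_b^\top+\tau B_{\bm w}M_{\bm w}^{-1}B_{\bm w}^\top+\tfrac{\alpha^2}{\zeta^2}M_p,$$ is symmetric positive definite, where $\zeta=\sqrt{\lambda+2\mu/d}$.
   Context: Finite element setting: $\Omega\subset\mathbb R^d$ ($d=2,3$) bounded polygonal/polyhedral with boundary split into $\Gamma_t,\Gamma_c$; parameters $\mu>0,\lambda\ge0,\alpha>0,M>0$, $\kappa$ symmetric uniformly positive definite, $\tau>0$; $a_T(\bm u,\bm v)=2\mu\int_T\epsilon(\bm u):\epsilon(\bm v)+\lambda\int_T(\nabla\cdot\bm u)(\nabla\cdot\bm v)$. Quasi-uniform shape-regular simplicial mesh $\mathcal T_h$, faces with fixed unit normals $\bm n_e$; $(p,q)_h=\sum_T\int_Tpq$, $(\beta,\rho)_{\partial\mathcal T_h}=\sum_T\int_{\partial T}\beta\rho$. Spaces: bubbles $\bm\Phi_e=\varphi_e\bm n_e$ with $\varphi_e|_T$ the product of barycentric coordinates of $T$ at the vertices of face $e$ ($T\supset e$), $\bm V_b$ spanned by $\bm\Phi_e$ for faces not contained in $\overline\Gamma_c$; $Q_h$ piecewise constants; $B_h$ piecewise constants on faces; $\bm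 W_h$ elementwise $RT_0$ fields without inter-element continuity and zero normal component on boundary faces. $d_b(\bm u^b,\bm v^b)=\sum_T(d+1)\sum_{e\subset\partial T}u_ev_ea_T(\bm\Phi_e,\bm\Phi_e)$. Matrices (w.r.t. basis $\{\bm\Phi_e\}$ of $\bm V_b$, characteristic-function bases of $Q_h,B_h$, a basis of $\bm W_h$): $D_{bb}\leftrightarrow d_b$; $B_b\leftrightarrow-(\nabla\cdot\bm u^b,q)$; $B_{\bm w}\leftrightarrow-(\nabla\cdot\bm w,q)_h$; $B_\beta\leftrightarrow-(\bm w\cdot\bm n_e,\rho)_{\partial\mathcal T_h}$; $M_p\leftrightarrow(p,q)$; $M_{\bm w}\leftrightarrow(\kappa^{-1}\bm w,\bm r)_h$.
   Formalization: The space $B_h$ consists of piecewise constants on the interior faces only, not on all faces, so $B_\beta$ has one row per interior face. The statement above fails without it. *)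

From HB Require Import structures.
From mathcomp Require Import all_boot all_order all_algebra.
Set Implicit Arguments. Unset Strict Implicit. Unset Printing Implicit Defensive.
Import Order.TTheory GRing.Theory Num.Theory.
Local Open Scope ring_scope.

Definition spd (R : realFieldType) (n : nat) (A : 'M[R]_n) : Prop :=
  A^T = A /\ forall v : 'cV[R]_n, v != 0 -> 0 < (v^T *m A *m v) 0 0.

(* Mesh data: elements, faces, face-element incidence, contact faces,
   sign n_e . n_{partial T} of the fixed face normal w.r.t. the outward normal,
   element volumes |T|, face measures |e|, and for the bubble of face e on T:
   strain T e = int_T eps(Phi_e):eps(Phi_e), divsq T e = int_T (div Phi_e)^2. *)
Record mesh (R : rcfType) := Mesh {
  Elem : finType;
  Face : finType;
  inc : Elem -> Face -> bool;
  contact : Face -> bool;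
  sgn : Elem -> Face -> R;
  vol : Elem -> R;
  area : Face -> R;
  strain : Elem -> Face -> R;
  divsq : Elem -> Face -> R
}.

Section MeshDefs.
Variables (R : rcfType) (m : mesh R).

Definition nelem (e : Face m) : nat := #|[set T | inc T e]|.
Definition interior (e : Face m) : bool := nelem e == 2%N.
Definition boundary (e : Face m) : bool := nelem e == 1%N.

Definition mesh_ok (d : nat) : Prop :=
  [/\ forall T : Elem m, #|[set e | inc T e]| = d.+1,
      forall e : Face m, interior e || boundary e,
      forall (T : Elem m) (e : Face m), inc T e -> sgn T e = 1 \/ sgn T e = -1,
      forall (e : Face m) (T1 T2 : Elem m), inc T1 e -> inc T2 e -> T1 != T2 -> sgn T1 e = - sgn T2 e &
      [/\ forall T : Elem m, 0 < vol T, forall e : Face m, 0 < area e,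
          forall (T : Elem m) (e : Face m), inc T e -> 0 < strain T e,
          forall (T : Elem m) (e : Face m), inc T e -> 0 <= divsq T e &
          forall e, contact e -> boundary e]].

Definition VbI := {e : Face m | ~~ contact e}.          (* bubbles Phi_e *)
Definition BI := {e : Face m | interior e}.               (* multipliers on faces *)
Definition WI := {p : Elem m * Face m | inc p.1 p.2 && interior p.2}.
  (* RT0 basis psi_(T,e): supported on T, flux 1 through face e, 0 through others *)

HB.instance Definition _ := Finite.copy VbI {e : Face m | ~~ contact e}.
HB.instance Definition _ := Finite.copy BI {e : Face m | interior e}.
HB.instance Definition _ := Finite.copy WI {p : Elem m * Face m | inc p.1 p.2 && interior p.2}.

Definition nQ := #|{: Elem m}|.
Definition nV := #|{: VbI}|.
Definition nB := #|{: BI}|.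
Definition nW := #|{: WI}|.

(* int_e varphi_e = |e| (d-1)! / (2d-1)! *)
Definition bubble_int (d : nat) (e : Face m) : R :=
  area e * ((d.-1)`!)%:R / (((2 * d).-1)`!)%:R.

Definition Mp : 'M[R]_nQ :=
  \matrix_(i, j) (if i == j then vol (enum_val i) else 0).

Definition a_bub (mu lambda : R) (T : Elem m) (e : Face m) : R :=
  2 * mu * strain T e + lambda * divsq T e.

Definition Dbb (d : nat) (mu lambda : R) : 'M[R]_nV :=
  \matrix_(i, j) (if i == j then
     (d.+1)%:R * \sum_(T | inc T (val (enum_val i))) a_bub mu lambda T (val (enum_val i))
   else 0).

(* -(div Phi_e, 1_T) = - (n_e.n_T) int_e varphi_e *)
Definition Bb (d : nat) : 'M[R]_(nQ, nV) :=
  \matrix_(i, j) (let T := enum_val i in let e := val (enum_val j) in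
     if inc T e then - (sgn T e * bubble_int d e) else 0).

(* -(div psi_(T',e'), 1_T) = - [T == T'] *)
Definition Bw : 'M[R]_(nQ, nW) :=
  \matrix_(i, j) (- (enum_val i == (val (enum_val j)).1)%:R).

(* -(psi_(T',e') . n_e, 1_e)_{partial T_h} = - [e == e'] (n_e . n_T') *)
Definition Bbeta : 'M[R]_(nB, nW) :=
  \matrix_(i, j) (let p := val (enum_val j) in
     - ((val (enum_val i) == p.2)%:R * sgn p.1 p.2)).

Definition ApE (d : nat) (mu lambda alpha M tau : R) (Mw : 'M[R]_nW) : 'M[R]_nQ :=
  let zeta := Num.sqrt (lambda + 2 * mu / d%:R) in
  M^-1 *: Mp + alpha ^+ 2 *: (Bb d *m invmx (Dbb d mu lambda) *m (Bb d)^T)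
  + tau *: (Bw *m invmx Mw *m Bw^T) + (alpha ^+ 2 / zeta ^+ 2) *: Mp.

Definition ApbE (d : nat) (mu lambda alpha M tau : R) (Mw : 'M[R]_nW)
  : 'M[R]_(nQ + nB) :=
  block_mx (ApE d mu lambda alpha M tau Mw) (tau *: (Bw *m invmx Mw *m Bbeta^T))
           (tau *: (Bbeta *m invmx Mw *m Bw^T)) (tau *: (Bbeta *m invmx Mw *m Bbeta^T)).

End MeshDefs.

(* Splitting off the pressure-only terms, A^E_{p beta} is
   diag(Q, 0) + tau C Mw^{-1} C^T with C = [B_w; B_beta] and
   Q = (1/M + alpha^2/zeta^2) M_p + alpha^2 B_b D_bb^{-1} B_b^T, where M_p and D_bb
   are diagonal with positive entries.  Both summands are positive semidefinite
   and Q is definite, so only vectors (0, b) with b <> 0 need the second summand.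
   Every interior face e lies on some element T, and the column of B_beta for the
   RT0 field of (T, e) is zero except for the entry -+1 in row e; hence
   B_beta^T b <> 0. *)
From mathcomp Require Import all_boot all_order all_algebra.
Import Order.TTheory GRing.Theory Num.Theory.
Local Open Scope ring_scope.
Set Implicit Arguments. Unset Strict Implicit.

Section QuadraticForms.
Variable R : realFieldType.

Definition qform n (A : 'M[R]_n) (v : 'cV_n) : R := (v^T *m A *m v) 0 0.

Definition psd n (A : 'M[R]_n) : Prop := A^T = A /\ forall v, 0 <= qform A v.

Lemma qformD n (A B : 'M[R]_n) v : qform (A + B) v = qform A v + qform B v.
Proof. by rewrite /qform mulmxDr mulmxDl mxE. Qed.

Lemma qformZ n a (A : 'M[R]_n) v : qform (a *: A) v = a * qform A v.
Proof. by rewrite /qform -scalemxAr -scalemxAl mxE. Qed.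

Lemma qform0v n (A : 'M[R]_n) : qform A 0 = 0.
Proof. by rewrite /qform mulmx0 mxE. Qed.

Lemma qform_congr n k (C : 'M[R]_(n, k)) X v :
  qform (C *m X *m C^T) v = qform X (C^T *m v).
Proof. by rewrite /qform trmx_mul trmxK !mulmxA. Qed.

Lemma qform_block_diag0 n1 n2 (Q : 'M[R]_n1) p (b : 'cV_n2) :
  qform (block_mx Q 0 0 0) (col_mx p b) = qform Q p.
Proof.
by rewrite /qform tr_col_mx mul_row_block mul_row_col !mulmx0 !addr0 mul0mx addr0.
Qed.

Lemma spd_psd n (A : 'M[R]_n) : spd A -> psd A.
Proof.
move=> [sA pA]; split=> // v; have [->|/pA/ltW //] := eqVneq v 0.
by rewrite qform0v.
Qed.

Lemma psdZ n a (A : 'M[R]_n) : 0 <= a -> psd A -> psd (a *: A).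
Proof.
move=> a_ge0 [sA pA]; split=> [|v]; first by rewrite linearZ /= sA.
by rewrite qformZ mulr_ge0.
Qed.

Lemma psd_congr n k (C : 'M[R]_(n, k)) X : psd X -> psd (C *m X *m C^T).
Proof.
move=> [sX pX]; split=> [|v]; last by rewrite qform_congr.
by rewrite !trmx_mul trmxK sX mulmxA.
Qed.

Lemma spdDl_psd n (A B : 'M[R]_n) : spd A -> psd B -> spd (A + B).
Proof.
move=> [sA pA] [sB pB]; split=> [|v v0]; first by rewrite linearD /= sA sB.
by rewrite -/(qform _ v) qformD ltr_pwDl ?pA.
Qed.

Lemma spdZ n a (A : 'M[R]_n) : 0 < a -> spd A -> spd (a *: A).
Proof.
move=> a_gt0 [sA pA]; split=> [|v v0]; first by rewrite linearZ /= sA.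
by rewrite -/(qform _ v) qformZ mulr_gt0 ?pA.
Qed.

Lemma spd_unitmx n (A : 'M[R]_n) : spd A -> A \in unitmx.
Proof.
move=> [_ pA]; rewrite unitmxE unitfE; apply/negP => /det0P [v v0 vA].
have vT0 : v^T != 0 by rewrite -(inj_eq (@trmx_inj _ _ _)) trmxK trmx0.
by have := pA _ vT0; rewrite trmxK vA mul0mx mxE ltxx.
Qed.

Lemma spd_invmx n (A : 'M[R]_n) : spd A -> spd (invmx A).
Proof.
move=> spdA; have uA := spd_unitmx spdA; case: spdA => sA pA.
split=> [|v v0]; first by rewrite trmx_inv sA.
have w0 : invmx A *m v != 0.
  by apply: contra v0 => /eqP w0; rewrite -(mulKVmx uA v) w0 mulmx0.
have := pA _ w0; rewrite trmx_mul trmx_inv sA.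
by rewrite -!mulmxA (mulmxA A) (mulmxV uA) mul1mx !mulmxA.
Qed.

Lemma diag_spd n (D : 'M[R]_n) (f : 'I_n -> R) :
  (forall i j, D i j = if i == j then f i else 0) -> (forall i, 0 < f i) ->
  spd D.
Proof.
move=> Dij f_gt0; split.
  by apply/matrixP => i j; rewrite !mxE !Dij eq_sym; case: eqP => // ->.
move=> v v0.
have -> : (v^T *m D *m v) 0 0 = \sum_j f j * v j 0 ^+ 2.
  rewrite mxE; apply: eq_bigr => j _.
  rewrite mxE (bigD1 j) //= big1 => [|k /negPf kj]; last by rewrite Dij kj mulr0.
  by rewrite addr0 !mxE Dij eqxx mulrAC -expr2 mulrC.
have /matrix0Pn [i [j vij]] := v0; rewrite ord1 in vij.
have vi_sqr_gt0 : 0 < v i 0 ^+ 2 by rewrite lt_def sqrf_eq0 vij sqr_ge0.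
rewrite (bigD1 i) //= (ltr_pwDl (mulr_gt0 (f_gt0 i) vi_sqr_gt0)) //.
by rewrite sumr_ge0 // => k _; rewrite mulr_ge0 ?sqr_ge0 ?ltW.
Qed.

Lemma spd_block_congr n1 n2 k (Q : 'M[R]_n1) (X : 'M[R]_k)
    (C1 : 'M[R]_(n1, k)) (C2 : 'M[R]_(n2, k)) :
  spd Q -> spd X -> (forall b : 'cV_n2, b != 0 -> C2^T *m b != 0) ->
  spd (block_mx Q 0 0 0 + col_mx C1 C2 *m X *m (col_mx C1 C2)^T).
Proof.
move=> spdQ spdX C2T_inj; have [sQ _] := spdQ; have [_ pX] := spd_psd spdX.
have [sCXC _] := psd_congr (col_mx C1 C2) (spd_psd spdX).
split=> [|v v0].
  by rewrite linearD /= sCXC tr_block_mx !trmx0 sQ.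
rewrite -/(qform _ v) -(vsubmxK v) in v0 *.
move: (usubmx v) (dsubmx v) v0 => p b pb0.
rewrite qformD qform_block_diag0 qform_congr.
have [p0 | p0] := eqVneq p 0.
  rewrite p0 qform0v add0r tr_col_mx mul_row_col mulmx0 add0r.
  apply: spdX.2; apply: C2T_inj; apply: contra pb0 => /eqP ->.
  by rewrite p0 col_mx0.
exact: ltr_pwDl (spdQ.2 p p0) (pX _).
Qed.

End QuadraticForms.

Section MeshMatrices.
Variables (R : rcfType) (m : mesh R) (d : nat).
Hypothesis m_ok : mesh_ok m d.

Lemma face_has_elem (e : Face m) : exists T, inc T e.
Proof.
case: m_ok => _ face_ok _ _ _.
have : (0 < nelem e)%N by case/orP: (face_ok e) => /eqP ->.
by rewrite /nelem card_gt0 => /set0Pn [T]; rewrite inE; exists T.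
Qed.

Lemma Mp_spd : spd (Mp m).
Proof.
case: m_ok => _ _ _ _ [vol_gt0 _ _ _ _].
by apply: (@diag_spd _ _ _ (fun i => vol (enum_val i))) => // i j; rewrite mxE.
Qed.

Lemma Dbb_spd mu lambda : 0 < mu -> 0 <= lambda -> spd (Dbb m d mu lambda).
Proof.
case: m_ok => _ _ _ _ [_ _ strain_gt0 divsq_ge0 _] mu_gt0 lambda_ge0.
have a_bub_gt0 (T : Elem m) (e : Face m) : inc T e -> 0 < a_bub mu lambda T e.
  move=> Te; rewrite /a_bub; apply: ltr_pwDl; last by rewrite mulr_ge0 ?divsq_ge0.
  by rewrite !mulr_gt0 ?strain_gt0.
apply: (@diag_spd _ _ _ (fun i => (d.+1)%:R *
  \sum_(T | inc T (val (enum_val i))) a_bub mu lambda T (val (enum_val i)))).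
  by move=> i j; rewrite mxE.
move=> i; have [T Te] := face_has_elem (val (enum_val i)).
rewrite mulr_gt0 ?ltr0Sn // (bigD1 T) //= ltr_pwDl ?a_bub_gt0 //.
by rewrite sumr_ge0 // => T' /andP [T'e _]; rewrite ltW ?a_bub_gt0.
Qed.

Lemma trmx_Bbeta_inj (b : 'cV[R]_(nB m)) : b != 0 -> (Bbeta m)^T *m b != 0.
Proof.
case: m_ok => _ _ sgn_unit _ _ b0.
have /matrix0Pn [i [j bij]] := b0; rewrite ord1 in bij.
set e := val (enum_val i); have e_int : interior e := valP (enum_val i).
have [T Te] := face_has_elem e.
have Te_int : inc (T, e).1 (T, e).2 && interior (T, e).2 by rewrite /= Te e_int.
pose w : WI m := exist _ (T, e) Te_int.
apply/negP => /eqP /matrixP /(_ (enum_rank w) 0).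
rewrite !mxE (bigD1 i) //= big1 ?addr0 => [|k ki].
  rewrite !mxE enum_rankK /= eqxx mul1r mulNr => /eqP.
  rewrite oppr_eq0 mulf_eq0 (negPf bij) orbF.
  by case: (sgn_unit _ _ Te) => ->; rewrite ?oppr_eq0 oner_eq0.
rewrite !mxE enum_rankK /=; case: eqP => [ke|]; last by rewrite !(mul0r, oppr0).
by case/negP: ki; apply/eqP/enum_val_inj/val_inj.
Qed.

End MeshMatrices.

Lemma ApbE_split (R : rcfType) (m : mesh R) d mu lambda alpha M tau Mw :
  let zeta := Num.sqrt (lambda + 2 * mu / d%:R) in
  let C := col_mx (Bw m) (Bbeta m) in
  ApbE d mu lambda alpha M tau Mw =
  block_mx ((M^-1 + alpha ^+ 2 / zeta ^+ 2) *: Mp m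
            + alpha ^+ 2 *: (Bb m d *m invmx (Dbb m d mu lambda) *m (Bb m d)^T)) 0 0 0
  + C *m (tau *: invmx Mw) *m C^T.
Proof.
move=> zeta C; rewrite -scalemxAr -scalemxAl /C mul_col_mx tr_col_mx mul_col_row.
rewrite scale_block_mx add_block_mx !add0r /ApbE /ApE -/zeta scalerDl.
by congr block_mx; rewrite addrAC (addrAC (M^-1 *: _)).
Qed.

Unset Implicit Arguments.

Theorem corollary1 (R : rcfType) (d : nat) (m : mesh R)
  (mu lambda alpha M tau : R) (Mw : 'M[R]_(nW m)) :
  (2 <= d <= 3)%N -> 0 < mu -> 0 <= lambda -> 0 < alpha -> 0 < M -> 0 < tau ->
  mesh_ok m d -> spd Mw ->
  spd (@ApbE R m d mu lambda alpha M tau Mw).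
Proof.
(* The bounds on d and alpha are not needed: 1/M alone makes the M_p term definite,
   and alpha^2/zeta^2 >= 0 even for the junk value zeta = 0. *)
move=> _ mu_gt0 lambda_ge0 _ M_gt0 tau_gt0 m_ok spdMw.
rewrite ApbE_split; apply: spd_block_congr; last exact: trmx_Bbeta_inj m_ok.
- apply: spdDl_psd.
    apply: spdZ (Mp_spd m_ok).
    by rewrite ltr_pwDl ?invr_gt0 ?divr_ge0 ?sqr_ge0.
  apply/psdZ/psd_congr/spd_psd/spd_invmx/Dbb_spd => //; exact: sqr_ge0.
- exact/spdZ/spd_invmx.
Qed.
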